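(* Let $X\in\mathbb{R}^d$, $Y\in\mathbb{R}$, $H\in\mathbb{R}^q$, $I\in\mathbb{R}^m$ be generated by the linear structural causal model $$X := BX + AI + h(H,\epsilon^X),\qquad Y := X^\top\beta^* + g(H,\epsilon^Y),$$ where $B\in\mathbb{R}^{d\times d}$ with $\operatorname{Id}-B$ invertible, $A\in\mathbb{R}^{d\times m}$, $\beta^*\in\mathbb{R}^d$, $h,g$ are arbitrary measurable functions, $I,H,\epsilon^X,\epsilon^Y$ are jointly independent, and $\operatorname{Cov}[I]$ is invertible. Let $C:=A^\top(\operatorname{Id}-B)^{-\top}\in\mathbb{R}^{m\times d}$, $\operatorname{PA}(Y):=\{j:\beta^*_j\neq 0\}$, and $\mathcal{B}:=\{\beta\in\mathbb{R}^d : \operatorname{Cov}(I,X)\beta=\operatorname{Cov}(I,Y)\}$. Consider the assumptions (A1) $\operatorname{rank}(C_{\operatorname{PA}(Y)})=|\operatorname{PA}(Y)|$; (A2) for all $S\subseteq\{1,\dots,d\}$: if $\operatorname{rank}(C_S)\le\operatorname{rank}(C_{\operatorname{PA}(Y)})$ and $\operatorname{im}(C_S)\neq\operatorname{im}(C_{\operatorname{PA}(Y)})$, then $C_S w\neq C_{\operatorname{PA}(Y)}\beta^*_{\operatorname{PA}(Y)}$ for all $w\in\mathbb{R}^{|S|}$; (A3) for all $S\subseteq\{1,\dots,d\}$ with $|S|=|\operatorname{PA}(Y)|$ and $S\neq\operatorname{PA}(Y)$, $\operatorname{im}(C_S)\neq\operatorname{im}(C_{\operatorname{PA}(Y)})$.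 If (A1) and (A2) hold, then $\beta^*$ is a solution of $\min_{\beta\in\mathcal{B}}\|\beta\|_0$. If in addition (A3) holds, then $\beta^*$ is the unique solution of this problem.
   Context: For a matrix $D\in\mathbb{R}^{m\times d}$ and $S\subseteq\{1,\dots,d\}$, $D_S$ is the $m\times|S|$ submatrix consisting of the columns indexed by $S$, and $\operatorname{im}(D)$ is the image (column space) of $D$. For a vector $v$, $v_S$ is the subvector indexed by $S$. $\|\beta\|_0$ is the number of non-zero entries of $\beta$. All covariances involved are assumed to exist. *)

From HB Require Import structures.
From mathcomp Require Import all_boot all_order all_algebra.
From mathcomp Require Import all_classical all_reals all_analysis.
Set Implicit Arguments. Unset Strict Implicit. Unset Printing Implicit Defensive.
Import Order.TTheory GRing.Theory Num.Theory.
Local Open Scope ring_scope.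
Local Open Scope classical_set_scope.

(* Column vectors 'cV[R]_n carry the product sigma-algebra generated by the
   coordinate projections (same construction as the library's instance on
   n.-tuple T). *)
Section measurable_cV.
Context {d} {T : sigmaRingType d}.
Variable n : nat.
Let coors : 'I_n -> 'cV[T]_n -> T := fun i x => x i ord0.
Let cV_set0 : g_sigma_preimage coors set0.
Proof. exact: sigma_algebra0. Qed.
Let cV_setC A : g_sigma_preimage coors A -> g_sigma_preimage coors (~` A).
Proof. exact: sigma_algebraC. Qed.
Let cV_bigcup (F : _^nat) : (forall i, g_sigma_preimage coors (F i)) ->
  g_sigma_preimage coors (\bigcup_i (F i)).
Proof. exact: sigma_algebra_bigcup. Qed.
HB.instance Definition _ := @isMeasurable.Build (measure_tuple_display d)
  'cV[T]_n (g_sigma_preimage coors) cV_set0 cV_setC cV_bigcup.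
End measurable_cV.

Definition mutually_independent4 {d} {T : measurableType d} {R : realType}
  (P : probability T R)
  {d1 d2 d3 d4} {T1 : measurableType d1} {T2 : measurableType d2}
  {T3 : measurableType d3} {T4 : measurableType d4}
  (X1 : T -> T1) (X2 : T -> T2) (X3 : T -> T3) (X4 : T -> T4) : Prop :=
  forall (A1 : set T1) (A2 : set T2) (A3 : set T3) (A4 : set T4),
    measurable A1 -> measurable A2 -> measurable A3 -> measurable A4 ->
    P (X1 @^-1` A1 `&` X2 @^-1` A2 `&` X3 @^-1` A3 `&` X4 @^-1` A4) =
    (P (X1 @^-1` A1) * P (X2 @^-1` A2) * P (X3 @^-1` A3) * P (X4 @^-1` A4))%E.

Definition covmx {d} {T : measurableType d} {R : realType} (P : probability T R)
  {m n} (U : T -> 'cV[R]_m) (V : T -> 'cV[R]_n) : 'M[R]_(m, n) :=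
  \matrix_(i, j) fine (covariance P (fun w => U w i 0) (fun w => V w j 0)).

Definition covvec {d} {T : measurableType d} {R : realType} (P : probability T R)
  {m} (U : T -> 'cV[R]_m) (Y : T -> R) : 'cV[R]_m :=
  \col_i fine (covariance P (fun w => U w i 0) Y).

(* D_S : columns of D indexed by S (in increasing order). *)
Definition cols {R : Type} {m n} (D : 'M[R]_(m, n)) (S : {set 'I_n}) : 'M[R]_(m, #|S|) :=
  \matrix_(i, k) D i (enum_val k).

Definition subv {R : Type} {n} (v : 'cV[R]_n) (S : {set 'I_n}) : 'cV[R]_#|S| :=
  \col_k v (enum_val k) 0.

Definition l0norm {R : ringType} {n} (b : 'cV[R]_n) : nat := #|[set j | b j 0 != 0]%SET|.

Definition l0_solution {R : ringType} {n} (Bset : 'cV[R]_n -> Prop) (b : 'cV[R]_n) : Prop :=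
  Bset b /\ forall b', Bset b' -> (l0norm b <= l0norm b')%N.

Definition l0_unique_solution {R : ringType} {n} (Bset : 'cV[R]_n -> Prop) (b : 'cV[R]_n) : Prop :=
  l0_solution Bset b /\ forall b', l0_solution Bset b' -> b' = b.

From HB Require Import structures.
From mathcomp Require Import all_boot all_order all_algebra.
From mathcomp Require Import all_classical all_reals all_analysis.
From mathcomp Require Import measurable_realfun.
Import Order.TTheory GRing.Theory Num.Theory.
Set Implicit Arguments. Unset Strict Implicit. Unset Printing Implicit Defensive.
Local Open Scope ring_scope.
Local Open Scope classical_set_scope.

(* The instruments I are independent of the pair (H, eps), hence uncorrelated
   with the noise terms h(H, epsX) and g(H, epsY).  Taking covariances with I
   in the two structural equations gives Cov(I, X) = Cov(I, I) C and
   Cov(I, Y) = Cov(I, X) beta*, so, Cov(I, I) being invertible, the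
   constraint set is {b | C b = C beta*}.  The rest is linear algebra on the
   columns of C: a solution b with support S satisfies C_S b_S = C_PA beta*_PA.
   If |S| < |PA| then rank C_S < rank C_PA by (A1), so the images differ,
   contradicting (A2).  If |S| = |PA|, (A3) and (A2) force S = PA, and then
   b = beta* because C_PA has full column rank. *)

Definition independent_rv {d} {T : measurableType d} {R : realType}
    (P : probability T R) {d1 d2} {T1 : measurableType d1} {T2 : measurableType d2}
    (U : T -> T1) (V : T -> T2) : Prop :=
  forall A D, measurable A -> measurable D ->
  P (U @^-1` A `&` V @^-1` D) = (P (U @^-1` A) * P (V @^-1` D))%E.

Lemma measurable_preimageT d1 d2 (T1 : measurableType d1) (T2 : measurableType d2)
    (f : T1 -> T2) (A : set T2) :
  measurable_fun setT f -> measurable A -> measurable (f @^-1` A).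
Proof. by move=> mf mA; rewrite -[X in measurable X]setTI; exact: mf. Qed.

Section independence.
Local Open Scope ereal_scope.
Context d (T : measurableType d) (R : realType) (P : probability T R).

Lemma independent_rv_comp d1 d2 d1' d2' (T1 : measurableType d1)
    (T2 : measurableType d2) (T1' : measurableType d1') (T2' : measurableType d2')
    (U : T -> T1) (V : T -> T2) (f : T1 -> T1') (k : T2 -> T2') :
  measurable_fun setT f -> measurable_fun setT k ->
  independent_rv P U V -> independent_rv P (f \o U) (k \o V).
Proof.
move=> mf mk UV A D mA mD.
by apply: (UV (f @^-1` A) (k @^-1` D)); exact: measurable_preimageT.
Qed.

Section independent_rv_pair.
Context d1 d2 d3 (T1 : measurableType d1) (T2 : measurableType d2)
  (T3 : measurableType d3).
Variables (U : T -> T1) (V1 : T -> T2) (V2 : T -> T3).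
Hypotheses (mU : measurable_fun setT U) (mV1 : measurable_fun setT V1)
  (mV2 : measurable_fun setT V2).
Hypothesis UV1V2 : forall A A1 A2, measurable A -> measurable A1 -> measurable A2 ->
  P (U @^-1` A `&` V1 @^-1` A1 `&` V2 @^-1` A2) =
  P (U @^-1` A) * P (V1 @^-1` A1) * P (V2 @^-1` A2).

Let V := fun w => (V1 w, V2 w).
Let mV : measurable_fun setT V.
Proof. exact: measurable_fun_pair. Qed.
HB.instance Definition _ := isMeasurableFun.Build _ _ _ _ V mV.

Variables (A : set T1) (mA : measurable A).
Let mUA : measurable (U @^-1` A).
Proof. exact: measurable_preimageT. Qed.

Let mu_A (D : set (T2 * T3)) := P (U @^-1` A `&` V @^-1` D).
Let mu_A0 : mu_A set0 = 0.
Proof. by rewrite /mu_A preimage_set0 setI0 measure0. Qed.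
Let mu_A_ge0 D : 0 <= mu_A D.
Proof. exact: measure_ge0. Qed.
Let mu_A_sigma_additive : semi_sigma_additive mu_A.
Proof.
move=> F mF tF mUF; rewrite /mu_A preimage_bigcup setI_bigcupr.
apply: measure_semi_sigma_additive.
- by move=> n; apply: measurableI => //; exact: measurable_preimageT.
- apply/trivIsetP => /= i j _ _ ij.
  rewrite setIACA setIid -preimage_setI.
  by move/trivIsetP : tF => /(_ _ _ Logic.I Logic.I ij) ->; rewrite preimage_set0 setI0.
- rewrite -setI_bigcupr -preimage_bigcup.
  by apply: measurableI => //; exact: measurable_preimageT.
Qed.
HB.instance Definition _ :=
  isMeasure.Build _ _ _ mu_A mu_A0 mu_A_ge0 mu_A_sigma_additive.

Let c : {nonneg R} := NngNum (fine_ge0 (measure_ge0 P (U @^-1` A))).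

(* Dynkin: both measures agree on the pi-system of measurable rectangles. *)
Let mu_A_scale D : measurable D -> mu_A D = mscale c (distribution P V) D.
Proof.
move=> mD.
apply: (measure_unique [set A1 `*` A2 | A1 in measurable & A2 in measurable]
  (fun _ => setT)) => //.
- exact: measurable_prod_measurableType.
- move=> _ _ [X1 mX1 [Y1 mY1 <-]] [X2 mX2 [Y2 mY2 <-]].
  rewrite -setXI; exists (X1 `&` X2); first exact: measurableI.
  by exists (Y1 `&` Y2) => //; exact: measurableI.
- by move=> _; exists setT => //; exists setT => //; rewrite setXTT.
- by rewrite bigcup_const.
- move=> _ [A1 mA1 [A2 mA2 <-]].
  transitivity (P (U @^-1` A `&` (V1 @^-1` A1 `&` V2 @^-1` A2))); first by [].
  transitivity (c%:num%:E * P (V1 @^-1` A1 `&` V2 @^-1` A2)); last by [].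
  rewrite setIA UV1V2 // fineK; last exact: fin_num_measure.
  have := @UV1V2 setT A1 A2 measurableT mA1 mA2.
  by rewrite preimage_setT setTI probability_setT mul1e => ->; rewrite muleA.
- move=> _; rewrite (le_lt_trans (probability_le1 _ _)) ?ltry //.
  by apply: measurableI => //; exact: measurable_preimageT.
Qed.

Lemma independent_rv_pair_subproof D : measurable D ->
  P (U @^-1` A `&` V @^-1` D) = P (U @^-1` A) * P (V @^-1` D).
Proof.
move=> mD; rewrite -/(mu_A D) mu_A_scale //.
by rewrite /mscale /= fineK // fin_num_measure.
Qed.

End independent_rv_pair.

Lemma independent_rv_pair d1 d2 d3 (T1 : measurableType d1) (T2 : measurableType d2)
    (T3 : measurableType d3) (U : T -> T1) (V1 : T -> T2) (V2 : T -> T3) :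
  measurable_fun setT U -> measurable_fun setT V1 -> measurable_fun setT V2 ->
  (forall A A1 A2, measurable A -> measurable A1 -> measurable A2 ->
    P (U @^-1` A `&` V1 @^-1` A1 `&` V2 @^-1` A2) =
    P (U @^-1` A) * P (V1 @^-1` A1) * P (V2 @^-1` A2)) ->
  independent_rv P U (fun w => (V1 w, V2 w)).
Proof.
by move=> mU mV1 mV2 UV1V2 A D mA mD; exact: independent_rv_pair_subproof.
Qed.

Lemma mutually_independent4_pairs d1 d2 d3 d4 (T1 : measurableType d1)
    (T2 : measurableType d2) (T3 : measurableType d3) (T4 : measurableType d4)
    (X1 : T -> T1) (X2 : T -> T2) (X3 : T -> T3) (X4 : T -> T4) :
  measurable_fun setT X1 -> measurable_fun setT X2 ->
  measurable_fun setT X3 -> measurable_fun setT X4 ->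
  mutually_independent4 P X1 X2 X3 X4 ->
  independent_rv P X1 (fun w => (X2 w, X3 w)) /\
  independent_rv P X1 (fun w => (X2 w, X4 w)).
Proof.
move=> m1 m2 m3 m4 X1234; split; apply: independent_rv_pair => // A A2 A3 mA mA2 mA3.
- have := X1234 _ _ _ _ mA mA2 mA3 measurableT.
  by rewrite preimage_setT setIT probability_setT mule1.
- have := X1234 _ _ _ _ mA mA2 measurableT mA3.
  by rewrite preimage_setT setIT probability_setT mule1.
Qed.

End independence.

Section independent_covariance.
Local Open Scope ereal_scope.
Context d (T : measurableType d) (R : realType) (P : probability T R).
Variables (X Z : T -> R).
Hypotheses (mX : measurable_fun setT X) (mZ : measurable_fun setT Z).
Hypotheses (X2 : X \in Lfun P 2%:E) (Z2 : Z \in Lfun P 2%:E).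
Hypothesis XZ : independent_rv P X Z.

HB.instance Definition _ := isMeasurableFun.Build _ _ _ _ X mX.
HB.instance Definition _ := isMeasurableFun.Build _ _ _ _ Z mZ.
Let XZpair := fun w => (X w, Z w).
Let mXZpair : measurable_fun setT XZpair.
Proof. exact: measurable_fun_pair. Qed.
HB.instance Definition _ := isMeasurableFun.Build _ _ _ _ XZpair mXZpair.

Let Pfin : P setT \is a fin_num.
Proof. exact: fin_num_measure. Qed.

Let joint_law_prod S : measurable S ->
  (distribution P X \x distribution P Z) S = distribution P XZpair S.
Proof.
apply: product_measure_unique => A B mA mB.
by rewrite /distribution /pushforward -XZ.
Qed.

Let integrable_XZ : P.-integrable setT (EFin \o (X \* Z)%R).
Proof. exact/(Lfun1_integrable P)/Lfun2_mul_Lfun1. Qed.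

Let mul_pair := fun p : R * R => (p.1 * p.2)%:E.

Let measurable_mul_pair : measurable_fun [set: (R * R)%type] mul_pair.
Proof. by apply: measurableT_comp => //; exact: measurable_funM. Qed.

Let integrable_mul_pair :
  (distribution P X \x distribution P Z).-integrable setT mul_pair.
Proof.
apply/integrableP; split => //.
rewrite (eq_measure_integral (distribution P XZpair)); last first.
  by move=> S mS _; exact: joint_law_prod.
rewrite ge0_integral_distribution//; last exact: measurableT_comp.
by move/integrableP : integrable_XZ => [].
Qed.

Let integrable_X : P.-integrable setT (EFin \o X).
Proof. exact/(Lfun1_integrable P)/Lfun_subset12. Qed.

Let integrable_Z : P.-integrable setT (EFin \o Z).
Proof. exact/(Lfun1_integrable P)/Lfun_subset12. Qed.

Lemma expectationM_independent : 'E_P[X \* Z] = 'E_P[X] * 'E_P[Z].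
Proof.
have intX : (distribution P X).-integrable setT (EFin \o id).
  by apply: integrable_pushforward => //; exact: measurableT_comp.
have intZ : (distribution P Z).-integrable setT (EFin \o id).
  by apply: integrable_pushforward => //; exact: measurableT_comp.
have EX : \int[distribution P X]_x x%:E = \int[P]_w (X w)%:E.
  by rewrite integral_distribution.
have EZ : \int[distribution P Z]_z z%:E = \int[P]_w (Z w)%:E.
  by rewrite integral_distribution.
have finZ : \int[P]_w (Z w)%:E \is a fin_num by exact: integrable_fin_num.
rewrite !unlock.
transitivity (\int[distribution P XZpair]_p mul_pair p).
  by rewrite integral_distribution.
rewrite (eq_measure_integral (distribution P X \x distribution P Z)); last first.
  by move=> S mS _; symmetry; apply: joint_law_prod.
rewrite -integral12_prod_meas1 //.
transitivity (\int[distribution P X]_x (x%:E * (fine (\int[P]_w (Z w)%:E))%:E)).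
  apply: eq_integral => x _; rewrite /fubini_F /mul_pair /=.
  under eq_integral do rewrite EFinM.
  by rewrite integralZl // EZ fineK.
by rewrite integralZr // EX fineK.
Qed.

Lemma covariance_independent : covariance P X Z = 0.
Proof.
have [X1 Z1] := (Lfun_subset12 Pfin X2, Lfun_subset12 Pfin Z2).
rewrite covarianceE //; last exact: Lfun2_mul_Lfun1.
rewrite expectationM_independent subee // fin_numM //; exact: expectation_fin_num.
Qed.

End independent_covariance.

Section covariance_linear.
Context d (T : measurableType d) (R : realType) (P : probability T R).

Let Pfin : P setT \is a fin_num.
Proof. exact: fin_num_measure. Qed.

Let le12 : 1 <= 2 :> R.
Proof. by rewrite ler1n. Qed.

Lemma covariance2_fin_num (U V : T -> R) :
  U \in Lfun P 2%:E -> V \in Lfun P 2%:E -> covariance P U V \is a fin_num.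
Proof.
move=> U2 V2; apply: covariance_fin_num;
  [exact: Lfun_subset12 | exact: Lfun_subset12 | exact: Lfun2_mul_Lfun1].
Qed.

Lemma fine_covarianceDr (U V W : T -> R) :
  U \in Lfun P 2%:E -> V \in Lfun P 2%:E -> W \in Lfun P 2%:E ->
  fine (covariance P U (V \+ W)) =
  fine (covariance P U V) + fine (covariance P U W).
Proof.
by move=> U2 V2 W2; rewrite covarianceDr // fineD // covariance2_fin_num.
Qed.

Lemma Lfun2_sum (I : Type) (r : seq I) (c : I -> R) (V : I -> T -> R) :
  (forall i, V i \in Lfun P 2%:E) ->
  (fun w => \sum_(i <- r) c i * V i w) \in Lfun P 2%:E.
Proof.
move=> V2; rewrite [X in X \in _](_ : _ = \sum_(i <- r) (c i \o* V i)).
  by rewrite rpred_sum ?lee1n // => i _; exact: Lfun_scale le12 (V2 i).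
by rewrite fct_sumE; apply/funext => w; apply: eq_bigr => i _; rewrite mulrC.
Qed.

Lemma fine_covariance_sumr (I : Type) (r : seq I) (c : I -> R) (U : T -> R)
    (V : I -> T -> R) :
  U \in Lfun P 2%:E -> (forall i, V i \in Lfun P 2%:E) ->
  fine (covariance P U (fun w => \sum_(i <- r) c i * V i w)) =
  \sum_(i <- r) c i * fine (covariance P U (V i)).
Proof.
move=> U2 V2; elim: r => [|i r IH].
  rewrite big_nil (_ : (fun _ => _) = cst 0); last by apply/funext => w; rewrite big_nil.
  by rewrite covariance_cst_r.
have ciVi2 : c i \o* V i \in Lfun P 2%:E by exact: Lfun_scale le12 (V2 i).
rewrite (_ : (fun _ => _) = (c i \o* V i) \+ (fun w => \sum_(j <- r) c j * V j w)).
  rewrite fine_covarianceDr ?Lfun2_sum // IH big_cons; congr (_ + _).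
  rewrite covarianceZr; [|exact: Lfun_subset12..|exact: Lfun2_mul_Lfun1].
  by rewrite fineM ?covariance2_fin_num.
by apply/funext => w; rewrite big_cons /= mulrC.
Qed.

End covariance_linear.

Lemma measurable_cV_coord {d} {T : measurableType d} {n} (j : 'I_n) :
  measurable_fun setT (fun x : 'cV[T]_n => x j 0).
Proof.
move=> _ Y mY; rewrite setTI; apply: sub_sigma_algebra => /=.
rewrite -bigcup_seq/=; exists j => /=; first by rewrite mem_index_enum.
by exists Y => //; rewrite setTI.
Qed.

Definition Lfun2_cV {d} {T : measurableType d} {R : realType} (P : probability T R)
    {n} (V : T -> 'cV[R]_n) : Prop :=
  forall j, (fun w => V w j 0) \in Lfun P 2%:E.

Section covariance_matrix.
Context d (T : measurableType d) (R : realType) (P : probability T R).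
Variables (m : nat) (U : T -> 'cV[R]_m).
Hypothesis U2 : Lfun2_cV P U.

Lemma Lfun2_cV_add n (V W : T -> 'cV[R]_n) :
  Lfun2_cV P V -> Lfun2_cV P W -> Lfun2_cV P (fun w => V w + W w).
Proof.
move=> V2 W2 j; rewrite (_ : (fun _ => _) = (fun w => V w j 0) + (fun w => W w j 0)).
  by rewrite rpredD ?lee1n.
by apply/funext => w; rewrite mxE.
Qed.

Lemma Lfun2_cV_opp n (V : T -> 'cV[R]_n) :
  Lfun2_cV P V -> Lfun2_cV P (fun w => - V w).
Proof.
move=> V2 j; rewrite (_ : (fun _ => _) = - (fun w => V w j 0)).
  by rewrite rpredN.
by apply/funext => w; rewrite mxE.
Qed.

Lemma Lfun2_cV_mulmx n k (M : 'M[R]_(k, n)) (V : T -> 'cV[R]_n) :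
  Lfun2_cV P V -> Lfun2_cV P (fun w => M *m V w).
Proof.
move=> V2 j; rewrite (_ : (fun _ => _) = (fun w => \sum_k M j k * V w k 0)).
  exact: Lfun2_sum.
by apply/funext => w; rewrite mxE.
Qed.

Lemma covmxDr n (V W : T -> 'cV[R]_n) : Lfun2_cV P V -> Lfun2_cV P W ->
  covmx P U (fun w => V w + W w) = covmx P U V + covmx P U W.
Proof.
move=> V2 W2; apply/matrixP => i j; rewrite !mxE -fine_covarianceDr //.
congr (fine (covariance _ _ _)).
by apply/funext => w /=; rewrite mxE.
Qed.

Lemma covmx_mulmxr n k (M : 'M[R]_(k, n)) (V : T -> 'cV[R]_n) : Lfun2_cV P V ->
  covmx P U (fun w => M *m V w) = covmx P U V *m M^T.
Proof.
move=> V2; apply/matrixP => i j; rewrite !mxE.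
rewrite (_ : (fun w => (M *m V w) j 0) = (fun w => \sum_k M j k * V w k 0)); last first.
  by apply/funext => w; rewrite mxE.
rewrite fine_covariance_sumr //; apply: eq_bigr => l _.
by rewrite !mxE mulrC.
Qed.

Lemma covvecDr (Y Z : T -> R) : Y \in Lfun P 2%:E -> Z \in Lfun P 2%:E ->
  covvec P U (fun w => Y w + Z w) = covvec P U Y + covvec P U Z.
Proof.
by move=> Y2 Z2; apply/matrixP => i j; rewrite !mxE -fine_covarianceDr.
Qed.

Lemma Lfun2_cV_dot n (V : T -> 'cV[R]_n) (b : 'cV[R]_n) : Lfun2_cV P V ->
  (fun w => ((V w)^T *m b) 0 0) \in Lfun P 2%:E.
Proof.
move=> V2; rewrite (_ : (fun _ => _) = (fun w => \sum_k b k 0 * V w k 0)).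
  exact: Lfun2_sum.
by apply/funext => w; rewrite mxE; apply: eq_bigr => k _; rewrite mxE mulrC.
Qed.

Lemma covvec_dot n (V : T -> 'cV[R]_n) (b : 'cV[R]_n) : Lfun2_cV P V ->
  covvec P U (fun w => ((V w)^T *m b) 0 0) = covmx P U V *m b.
Proof.
move=> V2; apply/matrixP => i j; rewrite ord1 !mxE.
rewrite (_ : (fun w => ((V w)^T *m b) 0 0) = (fun w => \sum_k b k 0 * V w k 0)); last first.
  by apply/funext => w; rewrite mxE; apply: eq_bigr => k _; rewrite mxE mulrC.
rewrite fine_covariance_sumr //; apply: eq_bigr => k _.
by rewrite !mxE mulrC.
Qed.

End covariance_matrix.

Section instrument_covariance.
Context d (T : measurableType d) (R : realType) (P : probability T R).
Variables (k : nat) (U : T -> 'cV[R]_k).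
Hypothesis U2 : Lfun2_cV P U.

Section independent_noise.
Context d' (T' : measurableType d') (V : T -> T').
Hypotheses (mU : measurable_fun setT U) (mV : measurable_fun setT V).
Hypothesis UV : independent_rv P U V.

Lemma covmx_independent n (f : T' -> 'cV[R]_n) :
  measurable_fun setT f -> Lfun2_cV P (f \o V) -> covmx P U (f \o V) = 0.
Proof.
move=> mf fV2; apply/matrixP => i j; rewrite !mxE.
have mfj : measurable_fun setT (fun y => f y j 0).
  exact: measurableT_comp (measurable_cV_coord j) mf.
have UfV : independent_rv P (fun w => U w i 0) (fun w => f (V w) j 0).
  exact: independent_rv_comp (measurable_cV_coord i) mfj UV.
by rewrite (covariance_independent (measurableT_comp (measurable_cV_coord i) mU)
  (measurableT_comp mfj mV) (U2 i) (fV2 j) UfV).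
Qed.

Lemma covvec_independent (g : T' -> R) :
  measurable_fun setT g -> g \o V \in Lfun P 2%:E -> covvec P U (g \o V) = 0.
Proof.
move=> mg gV2; apply/matrixP => i j; rewrite !mxE.
have UgV : independent_rv P (fun w => U w i 0) (g \o V).
  exact: independent_rv_comp (measurable_cV_coord i) mg UV.
by rewrite (covariance_independent (measurableT_comp (measurable_cV_coord i) mU)
  (measurableT_comp mg mV) (U2 i) gV2 UgV).
Qed.

End independent_noise.

Variables (n m : nat) (B : 'M[R]_n) (A : 'M[R]_(n, m)) (b : 'cV[R]_n).
Variables (X N : T -> 'cV[R]_n) (Z : T -> 'cV[R]_m) (Y G : T -> R).
Hypotheses (X2 : Lfun2_cV P X) (Z2 : Lfun2_cV P Z) (Y2 : Y \in Lfun P 2%:E).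
Hypothesis XE : forall w, X w = B *m X w + A *m Z w + N w.
Hypothesis YE : forall w, Y w = ((X w)^T *m b) 0 0 + G w.

Lemma Lfun2_cV_structural_noise : Lfun2_cV P N.
Proof.
have -> : N = fun w => X w + - (B *m X w + A *m Z w).
  by apply/funext => w; rewrite {1}XE addrAC subrr add0r.
apply: Lfun2_cV_add => //; apply: Lfun2_cV_opp.
by apply: Lfun2_cV_add; exact: Lfun2_cV_mulmx.
Qed.

Lemma Lfun2_structural_noise : G \in Lfun P 2%:E.
Proof.
have -> : G = Y - (fun w => ((X w)^T *m b) 0 0).
  by apply/funext => w; rewrite !fctE /= YE addrC addKr.
have dot2 := Lfun2_cV_dot b X2.
by rewrite rpredB ?lee1n.
Qed.

Lemma covmx_structural : (1%:M - B) \in unitmx -> covmx P U N = 0 ->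
  covmx P U X = covmx P U Z *m A^T *m (invmx (1%:M - B))^T.
Proof.
move=> unitB UN; have N2 := Lfun2_cV_structural_noise.
have covXE : covmx P U X = covmx P U X *m B^T + covmx P U Z *m A^T.
  rewrite {1}(_ : X = fun w => B *m X w + A *m Z w + N w); last exact/funext.
  rewrite !covmxDr ?UN ?addr0 ?covmx_mulmxr //;
    by do ?apply: Lfun2_cV_add; exact: Lfun2_cV_mulmx.
have UXB : covmx P U X *m (1%:M - B)^T = covmx P U Z *m A^T.
  by rewrite linearB /= trmx1 mulmxBr mulmx1 {1}covXE addrAC subrr add0r.
by rewrite trmx_inv -UXB mulmxK // unitmx_tr.
Qed.

Lemma covvec_structural : covvec P U G = 0 -> covvec P U Y = covmx P U X *m b.
Proof.
move=> UG; have G2 := Lfun2_structural_noise.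
rewrite (_ : Y = fun w => ((X w)^T *m b) 0 0 + G w); last exact/funext.
by rewrite covvecDr ?UG ?addr0 ?covvec_dot //; exact: Lfun2_cV_dot.
Qed.

End instrument_covariance.

Definition supp {V : zmodType} {n} (b : 'cV[V]_n) : {set 'I_n} :=
  [set j | b j 0 != 0]%SET.

Lemma mulmx_cols_supp (F : fieldType) m n (C : 'M[F]_(m, n)) (b : 'cV[F]_n)
    (S : {set 'I_n}) :
  supp b \subset S -> C *m b = cols C S *m subv b S.
Proof.
move=> bS; apply/matrixP => i k; rewrite !mxE (bigID (mem S)) /=.
rewrite [X in _ + X]big1 ?addr0; last first.
  move=> j jS; rewrite ord1; suff /eqP -> : b j 0 == 0 by rewrite mulr0.
  by apply: contraNT jS => bj; apply: (fintype.subsetP bS); rewrite inE.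
by rewrite big_enum_val; apply: eq_bigr => l _; rewrite !mxE ord1.
Qed.

Section sparsest_solution.
Variables (F : fieldType) (m n : nat) (C : 'M[F]_(m, n)) (beta : 'cV[F]_n).
Let PA := supp beta.
Hypothesis full_rank_PA : \rank (cols C PA) = #|PA|.
Hypothesis no_small_representation : forall S : {set 'I_n},
  (\rank (cols C S) <= \rank (cols C PA))%N ->
  ~~ ((cols C S)^T == (cols C PA)^T)%MS ->
  forall w : 'cV[F]_#|S|, cols C S *m w != cols C PA *m subv beta PA.

Let solutions b := C *m b = C *m beta.

Let eqmx_cols_supp b : solutions b ->
  (\rank (cols C (supp b)) <= \rank (cols C PA))%N ->
  ((cols C (supp b))^T == (cols C PA)^T)%MS.
Proof.
move=> Cb rk; apply/negPn/negP => neq.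
have := @no_small_representation (supp b) rk neq (subv b (supp b)).
by rewrite -!mulmx_cols_supp // Cb eqxx.
Qed.

Lemma l0norm_supp_le b : solutions b -> (#|PA| <= l0norm b)%N.
Proof.
move=> Cb; rewrite leqNgt; apply/negP => lt_b_PA.
have rk_lt : (\rank (cols C (supp b)) < \rank (cols C PA))%N.
  by rewrite full_rank_PA; exact: leq_ltn_trans (rank_leq_col _) lt_b_PA.
move/eqmx_rank: (@eqmx_cols_supp b Cb (ltnW rk_lt)).
by rewrite !mxrank_tr => rk_eq; rewrite rk_eq ltnn in rk_lt.
Qed.

Lemma l0_solution_supp : l0_solution solutions beta.
Proof. by split => // b; exact: l0norm_supp_le. Qed.

Lemma supp_solution_eq b : solutions b -> supp b = PA -> b = beta.
Proof.
move=> Cb bPA.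
have [B0 B0C] : exists B0, B0 *m cols C PA = 1%:M.
  by apply/row_fullP; rewrite /row_full full_rank_PA.
have eq_PA : subv b PA = subv beta PA.
  rewrite -[LHS]mul1mx -[RHS]mul1mx -B0C -!mulmxA -!mulmx_cols_supp ?bPA //.
  by rewrite Cb.
apply/matrixP => j k; rewrite ord1.
have [jPA|jPA] := boolP (j \in PA).
  have := congr1 (fun v : 'cV[F]__ => v (enum_rank_in jPA j) 0) eq_PA.
  by rewrite !mxE enum_rankK_in.
have jb : j \notin supp b by rewrite bPA.
by move: jPA jb; rewrite !inE !negbK => /eqP -> /eqP ->.
Qed.

Hypothesis distinct_images : forall S : {set 'I_n}, #|S| = #|PA| -> S != PA ->
  ~~ ((cols C S)^T == (cols C PA)^T)%MS.

Lemma supp_l0_solution b : l0_solution solutions b -> supp b = PA.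
Proof.
move=> [Cb minb]; have l0b : l0norm b = #|PA|.
  by apply/eqP; rewrite eqn_leq; apply/andP; split; [exact: minb | exact: l0norm_supp_le].
apply/eqP; apply: contraT => neq.
have rk_le : (\rank (cols C (supp b)) <= \rank (cols C PA))%N.
  by rewrite full_rank_PA -l0b; exact: rank_leq_col.
by have := @distinct_images (supp b) l0b neq; rewrite (@eqmx_cols_supp b Cb rk_le).
Qed.

Lemma l0_unique_solution_supp : l0_unique_solution solutions beta.
Proof.
split; first exact: l0_solution_supp.
by move=> b bsol; apply: supp_solution_eq; [case: bsol | exact: supp_l0_solution].
Qed.

End sparsest_solution.

Theorem theorem1 (R : realType) (dT : measure_display) (T : measurableType dT)
  (P : probability T R) (d m q : nat)
  (dX dY : measure_display) (EX : measurableType dX) (EY : measurableType dY)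
  (B : 'M[R]_d) (A : 'M[R]_(d, m)) (beta : 'cV[R]_d)
  (h : 'cV[R]_q -> EX -> 'cV[R]_d) (g : 'cV[R]_q -> EY -> R)
  (X : T -> 'cV[R]_d) (Y : T -> R) (H : T -> 'cV[R]_q) (I : T -> 'cV[R]_m)
  (epsX : T -> EX) (epsY : T -> EY) :
  (1%:M - B) \in unitmx ->
  measurable_fun setT (fun p : 'cV[R]_q * EX => h p.1 p.2) ->
  measurable_fun setT (fun p : 'cV[R]_q * EY => g p.1 p.2) ->
  measurable_fun setT I -> measurable_fun setT H ->
  measurable_fun setT epsX -> measurable_fun setT epsY ->
  mutually_independent4 P I H epsX epsY ->
  (forall w, X w = B *m X w + A *m I w + h (H w) (epsX w)) ->
  (forall w, Y w = ((X w)^T *m beta) 0 0 + g (H w) (epsY w)) ->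
  (forall i, (fun w => I w i 0) \in Lfun P 2%:E) ->
  (forall j, (fun w => X w j 0) \in Lfun P 2%:E) ->
  Y \in Lfun P 2%:E ->
  covmx P I I \in unitmx ->
  let C : 'M[R]_(m, d) := A^T *m (invmx (1%:M - B))^T in
  let PA : {set 'I_d} := [set j | beta j 0 != 0]%SET in
  let Bset : 'cV[R]_d -> Prop := fun b => covmx P I X *m b = covvec P I Y in
  (* (A1) *)
  \rank (cols C PA) = #|PA| ->
  (* (A2) *)
  (forall S : {set 'I_d},
     (\rank (cols C S) <= \rank (cols C PA))%N ->
     ~~ ((cols C S)^T == (cols C PA)^T)%MS ->
     forall w : 'cV[R]_#|S|, cols C S *m w != cols C PA *m subv beta PA) ->
  l0_solution Bset beta /\
  ((* (A3) *)
   (forall S : {set 'I_d}, #|S| = #|PA| -> S != PA ->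
      ~~ ((cols C S)^T == (cols C PA)^T)%MS) ->
   l0_unique_solution Bset beta).
Proof.
move=> unitB mh mg mI mH meX meY indep XE YE I2 X2 Y2 unitI C PA Bset A1 A2.
have [I_HepsX I_HepsY] := mutually_independent4_pairs mI mH meX meY indep.
have mHepsX : measurable_fun setT (fun w => (H w, epsX w)) by exact: measurable_fun_pair.
have mHepsY : measurable_fun setT (fun w => (H w, epsY w)) by exact: measurable_fun_pair.
have covI_noiseX := covmx_independent I2 mI mHepsX I_HepsX mh
  (Lfun2_cV_structural_noise X2 I2 XE).
have covI_noiseY := covvec_independent I2 mI mHepsY I_HepsY mg
  (Lfun2_structural_noise X2 Y2 YE).
have covIX : covmx P I X = covmx P I I *m C.
  by rewrite mulmxA (covmx_structural I2 X2 I2 XE unitB covI_noiseX).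
have covIY := covvec_structural I2 X2 Y2 YE covI_noiseY.
have -> : Bset = fun b => C *m b = C *m beta.
  apply/funext => b; apply/propext; rewrite /Bset covIY covIX -!mulmxA.
  by split => [/(congr1 (mulmx (invmx (covmx P I I))))|->]; rewrite ?mulKmx.
split; first exact: l0_solution_supp.
by move=> A3; exact: l0_unique_solution_supp.
Qed.
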